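(* Let $T$ be a finite tree and let $P=p_0p_1\dots p_k$ ($k\ge1$) be a path in $T$ such that each of $p_1,\dots,p_{k-1}$ has degree $2$ in $T$. Let $B$ be the vertex set of the component containing $p_k$ of the graph obtained from $T$ by deleting the edges of $P$. Let $T'$ be the tree obtained from $T$ by deleting all edges between $p_k$ and $\Gamma(p_k)\setminus\{p_{k-1}\}$ and adding the edges between $p_0$ and $\Gamma(p_k)\setminus\{p_{k-1}\}$ instead. If $k$ is odd, then for every $\ell\ge1$, \[\omega_{\ell}(p_0,T[B\cup P])-\omega_{\ell}(p_0,P)\leq \omega_{\ell}(p_0,T'[B\cup P])-\omega_{\ell}(p_0,P).\]
   Context: $\Gamma(v)$ is the set of neighbours of $v$ in $T$. For a graph $G$ containing the vertices of $B$ and $P$, $G[B\cup P]$ is the subgraph of $G$ induced by $B\cup\{p_0,\dots,p_k\}$. For a graph $G$, a vertex $x$ and $\ell\ge1$, $\omega_\ell(x,G)$ is the number of walks of length $\ell$ in $G$ starting at $x$. $P$ is regarded as a graph (the path). *)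

From mathcomp Require Import all_boot all_order all_algebra.
Set Implicit Arguments. Unset Strict Implicit. Unset Printing Implicit Defensive.

Section Graphs.
Variable V : finType.

Definition simple_graph (e : rel V) : Prop := symmetric e /\ irreflexive e.

Definition graph_connected (e : rel V) : Prop := forall x y, connect e x y.

Definition acyclic (e : rel V) : Prop :=
  forall c : seq V, uniq c -> 2 < size c -> ~~ cycle e c.

Definition is_tree (e : rel V) : Prop :=
  simple_graph e /\ graph_connected e /\ acyclic e.

Definition nbhd (e : rel V) (v : V) : {set V} := [set y | e v y].

Definition is_path (e : rel V) (p : nat -> V) (k : nat) : Prop :=
  (forall i j, i <= k -> j <= k -> p i = p j -> i = j) /\
  (forall i, i < k -> e (p i) (p i.+1)).

Definition path_edge (p : nat -> V) (k : nat) : rel V :=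
  fun x y => [exists i : 'I_k,
    ((x == p i) && (y == p i.+1)) || ((y == p i) && (x == p i.+1))].

Definition path_vertices (p : nat -> V) (k : nat) : {set V} :=
  [set p (nat_of_ord i) | i : 'I_k.+1].

Definition del_path_edges (e : rel V) (p : nat -> V) (k : nat) : rel V :=
  fun x y => e x y && ~~ path_edge p k x y.

Definition compB (e : rel V) (p : nat -> V) (k : nat) : {set V} :=
  [set x | connect (del_path_edges e p k) (p k) x].

Definition moved_tree (e : rel V) (p : nat -> V) (k : nat) : rel V :=
  let N := nbhd e (p k) :\ p k.-1 in
  fun x y =>
    (e x y && ~~ (((x == p k) && (y \in N)) || ((y == p k) && (x \in N))))
    || (((x == p 0) && (y \in N)) || ((y == p 0) && (x \in N))).

Definition induced (e : rel V) (S : {set V}) : rel V :=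
  fun x y => [&& x \in S, y \in S & e x y].

Fixpoint walks (e : rel V) (l : nat) (x : V) : nat :=
  match l with
  | 0 => 1
  | l'.+1 => \sum_(y | e x y) walks e l' y
  end.

End Graphs.

From mathcomp Require Import all_boot all_order all_algebra zify.
Import Order.TTheory GRing.Theory Num.Theory.

(* Reflecting the path, p_i <-> p_(k-i), and fixing all other vertices is an
   isomorphism from T[B u P] onto T'[B u P] mapping p_0 to p_k: acyclicity and
   the degree condition force p_0 and p_k into different components of T minus
   the edges of P, so in T[B u P] the vertex p_0 is a leaf hanging off p_1 and
   only p_k carries the rest of B, while in T' these roles are swapped. Hence
   it suffices to show that in T'[B u P] the leaf p_k starts at most as many
   walks as p_0. With k = 2m+1, induction on the length shows that p_(m+j)
   starts at most as many walks as p_(m-j), for all j <= m; taking j = m gives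
   w_(l+1)(p_k) = w_l(p_2m) <= w_l(p_0) <= w_(l+1)(p_0). *)

Section Walks.
Context {V : finType}.
Implicit Types (e : rel V) (x y z : V).

Lemma induced_sym e (S : {set V}) : symmetric e -> symmetric (induced e S).
Proof. by move=> e_sym x y; rewrite /induced e_sym andbCA. Qed.

Lemma eq_induced e1 e2 (S : {set V}) : e1 =2 e2 -> induced e1 S =2 induced e2 S.
Proof. by move=> e12 x y; rewrite /induced e12. Qed.

Lemma walksS e l x : walks e l.+1 x = \sum_(y | e x y) walks e l y.
Proof. by []. Qed.

Lemma eq_walks e1 e2 : e1 =2 e2 -> walks e1 =2 walks e2.
Proof.
move=> e12; elim=> [|l IHl] x //=.
by apply: eq_big => y; rewrite ?e12 ?IHl.
Qed.

Lemma walks_inj e1 e2 (f : V -> V) :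
  injective f -> {mono f : x y / e1 x y >-> e2 x y} ->
  forall l x, walks e2 l (f x) = walks e1 l x.
Proof.
move=> f_inj f_mono; elim=> [|l IHl] x //=.
rewrite (reindex_inj f_inj) /=.
by apply: eq_big => y; rewrite ?f_mono ?IHl.
Qed.

Lemma leq_walks_adj e l x y : e x y -> walks e l y <= walks e l.+1 x.
Proof. by move=> exy; rewrite walksS (bigD1 y) //= leq_addr. Qed.

Lemma leq_walks_adj2 e l x y z :
  e x y -> e x z -> y != z -> walks e l y + walks e l z <= walks e l.+1 x.
Proof.
move=> exy exz /negbTE yz; rewrite walksS (bigD1 y) //= (bigD1 z) /=.
  by rewrite addnA leq_addr.
by rewrite exz eq_sym yz.
Qed.

Lemma leq_walksS e l x y :
  symmetric e -> e x y -> walks e l x <= walks e l.+1 x.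
Proof.
move=> e_sym; elim: l x y => [|l IHl] x y exy; first exact: (@leq_walks_adj e 0 x y exy).
rewrite walksS [walks e l.+2 x]walksS; apply: leq_sum => z exz.
by apply: (IHl z x); rewrite e_sym.
Qed.

Lemma walks_leaf e l x y :
  (forall z, e x z = (z == y)) -> walks e l.+1 x = walks e l y.
Proof. by move=> ex; rewrite walksS (eq_bigl (pred1 y)) ?big_pred1_eq. Qed.

Lemma walks_deg2 e l x y1 y2 :
  y1 != y2 -> (forall z, e x z = (z == y1) || (z == y2)) ->
  walks e l.+1 x = walks e l y1 + walks e l y2.
Proof.
move=> y12 ex; rewrite walksS (bigD1 y1) ?ex ?eqxx //= (bigD1 y2) /=; last first.
  by rewrite ex eqxx orbT eq_sym.
rewrite big1 ?addn0 // => z; rewrite ex.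
by case: (z == y1); case: (z == y2).
Qed.

End Walks.

(* [W l i] abstracts the number of walks of length [l] from the [i]-th vertex
   of a path [0 .. 2m+1] whose end [2m+1] is a leaf and whose start [0] has
   another neighbour, with [X l] walks. The second conjunct only serves to
   carry the induction on [l]. *)
Lemma pendant_path_walks (W : nat -> nat -> nat) (X : nat -> nat) (m : nat) :
  (forall l i, 0 < i -> i < m.*2.+1 -> W l.+1 i = W l i.-1 + W l i.+1) ->
  (forall l, W l.+1 m.*2.+1 = W l m.*2) ->
  (forall l, W l 1 + X l <= W l.+1 0) ->
  (forall l, W l 0 <= X l.+1) ->
  (forall i, W 0 i = 1) -> 0 < X 0 ->
  forall l, (forall j, j <= m -> W l (m + j) <= W l (m - j)) /\ W l m.*2.+1 <= X l.
Proof.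
move=> W_inner W_leaf W_root X_root W0 X0; elim=> [|l [IHl IHX]].
  by split=> [j _|]; rewrite !W0.
split; last first.
  rewrite W_leaf; apply: leq_trans (X_root l).
  by have := IHl m (leqnn m); rewrite subnn addnn.
case=> [|j] ltjm; first by rewrite addn0 subn0.
rewrite W_inner; [|lia|lia].
have left_step : W l (m + j.+1).-1 <= W l (m - j).
  by rewrite addnS /=; apply: IHl; lia.
have [ltj1m | lemj1] := ltnP j.+1 m.
  rewrite W_inner; [|lia|lia].
  have right_step := IHl j.+2 ltj1m.
  have -> : (m - j.+1).+1 = m - j by lia.
  have -> : (m - j.+1).-1 = m - j.+2 by lia.
  have -> : (m + j.+1).+1 = m + j.+2 by lia.
  by rewrite addnC leq_add.
have -> : m - j.+1 = 0 by lia.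
have -> : (m + j.+1).+1 = m.*2.+1 by lia.
rewrite (_ : m - j = 1) in left_step; last by lia.
exact: leq_trans (leq_add left_step (IHX)) (W_root l).
Qed.

Section PathInTree.
Context {V : finType}.
Variables (e : rel V) (p : nat -> V) (k : nat).
Hypotheses (e_sym : symmetric e) (e_irr : irreflexive e) (e_acyclic : acyclic e).
Hypotheses (k_gt0 : 0 < k)
  (p_inj : forall i j, i <= k -> j <= k -> p i = p j -> i = j)
  (p_edge : forall i, i < k -> e (p i) (p i.+1))
  (inner_deg2 : forall i, 0 < i -> i < k -> #|nbhd e (p i)| = 2).

Local Notation BP := (compB e p k :|: path_vertices p k).
Local Notation moved := (nbhd e (p k) :\ p k.-1).

Lemma eq_path_vertex i j : i <= k -> j <= k -> (p i == p j) = (i == j).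
Proof. by move=> le_ik le_jk; apply/eqP/eqP => [/(p_inj _ _ le_ik le_jk)|->]. Qed.

Lemma path_vertexP x :
  reflect (exists2 i, i <= k & x = p i) (x \in path_vertices p k).
Proof.
apply: (iffP imsetP) => [[i _ ->]|[i le_ik ->]]; first by exists i; rewrite // -ltnS.
by exists (Ordinal (le_ik : i < k.+1)).
Qed.

Lemma off_path_neq h j :
  h \notin path_vertices p k -> j <= k -> (h == p j) = false.
Proof. by move=> h_off le_jk; apply: contraNF h_off => /eqP ->; apply/path_vertexP; exists j. Qed.

Lemma path_in_BP i : i <= k -> p i \in BP.
Proof. by move=> le_ik; rewrite inE; apply/orP; right; apply/path_vertexP; exists i. Qed.

Lemma path_edge_sym : symmetric (path_edge p k).
Proof. by move=> x y; apply: eq_existsb => i; rewrite orbC. Qed.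

Lemma path_edge_step i : i < k -> path_edge p k (p i) (p i.+1).
Proof. by move=> lt_ik; apply/existsP; exists (Ordinal lt_ik); rewrite !eqxx. Qed.

Lemma path_edgeP x y : path_edge p k x y ->
  exists2 i, i < k & (x = p i /\ y = p i.+1) \/ (y = p i /\ x = p i.+1).
Proof.
by case/existsP=> i /orP [] /andP [/eqP-> /eqP->]; exists i => //; [left|right].
Qed.

Lemma inner_nbhdE i y :
  0 < i -> i < k -> e (p i) y = (y == p i.-1) || (y == p i.+1).
Proof.
move=> i_gt0 lt_ik.
suff /setP/(_ y) : nbhd e (p i) = [set p i.-1; p i.+1] by rewrite !inE.
apply/esym/eqP; rewrite eqEcard inner_deg2 // cards2 eq_path_vertex; try lia.
rewrite (_ : (i.-1 == i.+1) = false) ?andbT; last by apply/eqP; lia.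
apply/subsetP => z; rewrite !inE => /orP [] /eqP ->; last exact: p_edge.
by rewrite e_sym -{2}(prednK i_gt0); apply: p_edge; lia.
Qed.

Lemma del_path_edges_inner i y :
  0 < i -> i < k -> ~~ del_path_edges e p k y (p i).
Proof.
move=> i_gt0 lt_ik; apply/negP => /andP [].
rewrite e_sym inner_nbhdE // => /orP [] /eqP ->; apply/negP/negPn.
  by rewrite -{2}(prednK i_gt0); apply: path_edge_step; lia.
by rewrite path_edge_sym path_edge_step.
Qed.

Lemma path_p0_iota : path e (p 0) [seq p i | i <- iota 1 k].
Proof.
suff path_from n a : a + n <= k -> path e (p a) [seq p i | i <- iota a.+1 n].
  exact: path_from.
by elim: n a => [|n IHn] a le_ank //=; rewrite p_edge ?IHn //; lia.
Qed.

(* A shortest walk from [p k] to [p 0] avoiding the edges of the path cannot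
   pass through its inner vertices, so it closes a cycle with the path. *)
Lemma path_ends_disconnected : ~~ connect (del_path_edges e p k) (p k) (p 0).
Proof.
apply/negP => /connectP [q0 q0_path].
case/shortenP: q0_path => q q_path /= /andP [pk_q q_uniq] _ /esym q_last.
have inner_notin_q i : 0 < i -> i < k -> p i \notin q.
  move=> i_gt0 lt_ik; apply/negP => pi_q; move: q_path.
  case/splitPr: pi_q => q1 q2; rewrite cat_path /= => /and3P [_ del_edge _].
  by rewrite (negbTE (del_path_edges_inner _ (last (p k) q1) i_gt0 lt_ik)) in del_edge.
have cycle_size : 1 < size q + k.-1.
  case: q q_path q_last {pk_q q_uniq inner_notin_q} => [|y [|z q]] /=; last lia.
    by move=> _ /eqP; rewrite eq_path_vertex //; lia.
  rewrite andbT => /andP [_ /negP not_path_edge] y0.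
  have [|le_k1] := ltnP 1 k; first lia.
  have k1 : k = 1 by lia.
  case: not_path_edge; rewrite y0 path_edge_sym [in p k]k1.
  exact: path_edge_step.
set c := p k :: q ++ [seq p i | i <- iota 1 k.-1].
have c_cycle : cycle e c.
  rewrite /c /= rcons_cat cat_path q_last; apply/andP; split.
    by apply: sub_path q_path => x y /andP [].
  rewrite -map_rcons -cats1 (_ : _ ++ _ = iota 1 k); first exact: path_p0_iota.
  by rewrite -[in RHS](prednK k_gt0) -[k.-1.+1]addn1 iotaD add1n prednK.
have c_uniq : uniq c.
  rewrite /c cons_uniq mem_cat negb_or pk_q cat_uniq q_uniq /=.
  rewrite map_inj_in_uniq ?iota_uniq ?andbT; last first.
    by move=> i j; rewrite !mem_iota => ? ?; apply: p_inj; lia.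
  apply/andP; split.
    by apply/mapP => [[i]]; rewrite mem_iota => ? /eqP; rewrite eq_path_vertex; lia.
  apply/hasP => [[x /mapP [i]]]; rewrite mem_iota => ? -> /=.
  by apply/negP/inner_notin_q; lia.
have c_size : 2 < size c by rewrite /c /= size_cat size_map size_iota.
by have := e_acyclic _ c_uniq c_size; rewrite c_cycle.
Qed.

Lemma del_path_edges_p0 y : e (p 0) y -> y != p 1 -> del_path_edges e p k (p 0) y.
Proof.
move=> e0y y_neq1; rewrite /del_path_edges e0y; apply/negP => /path_edgeP [i lt_ik].
case=> [[p0_pi y_pi1]|[_ p0_pi1]].
  have i0 := p_inj _ _ (leq0n k) (ltnW lt_ik) p0_pi.
  by move: y_neq1; rewrite y_pi1 -i0 eqxx.
by have := p_inj _ _ (leq0n k) lt_ik p0_pi1.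
Qed.

Lemma compB_adj_p0 y : y \in compB e p k -> e (p 0) y -> y = p 1.
Proof.
rewrite inE => pk_y e0y; apply/eqP; apply: contraT => y_neq1.
have del_sym : symmetric (del_path_edges e p k).
  by move=> a b; rewrite /del_path_edges e_sym path_edge_sym.
move: path_ends_disconnected; rewrite (connect_trans pk_y) //.
by apply: connect1; rewrite del_sym del_path_edges_p0.
Qed.

Lemma path_adjE i j :
  i <= k -> j <= k -> e (p i) (p j) = (j == i.+1) || (i == j.+1).
Proof.
suff adjE_lt a b : a < k -> b <= k -> e (p a) (p b) = (b == a.+1) || (a == b.+1).
  move=> le_ik le_jk; have [lt_ik|le_ki] := ltnP i k; first exact: adjE_lt.
  have -> : i = k by lia.
  have [lt_jk|le_kj] := ltnP j k; first by rewrite e_sym adjE_lt // orbC.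
  have -> : j = k by lia.
  by rewrite e_irr ltn_eqF.
case: a => [|a] lt_ak le_bk; last first.
  by rewrite inner_nbhdE //= !eq_path_vertex //; lia.
have [lt_bk|le_kb] := ltnP b k.
  case: b lt_bk le_bk => [|b] lt_bk le_bk; first by rewrite e_irr.
  by rewrite e_sym inner_nbhdE //= !eq_path_vertex //; lia.
have -> : b = k by lia.
apply/idP/idP => [/(compB_adj_p0 (p k))|].
  by rewrite inE connect0 => /(_ isT) /(p_inj _ _ (leqnn k) k_gt0) ->.
by rewrite orbF => /eqP {1}->; apply: p_edge.
Qed.

Lemma moved_off_path y : y \in moved -> y \notin path_vertices p k.
Proof.
rewrite !inE => /andP [y_neq e_ky]; apply/path_vertexP => [[j le_jk y_eq]].
move: e_ky y_neq; rewrite y_eq path_adjE // => /orP [] /eqP kj; first lia.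
by rewrite kj /= eqxx.
Qed.

Lemma path_notin_moved j : j <= k -> (p j \in moved) = false.
Proof.
by move=> le_jk; apply: contraTF (moved_off_path (p j)) _; apply/path_vertexP; exists j.
Qed.

Lemma moved_in_B y : y \in moved -> y \in compB e p k.
Proof.
rewrite !inE => /andP [y_neq e_ky]; apply: connect1; rewrite /del_path_edges e_ky.
apply/negP => /path_edgeP [i lt_ik] [[pk_pi _]|[y_eq pk_pi]].
  by have := p_inj _ _ (leqnn k) (ltnW lt_ik) pk_pi; lia.
have ki := p_inj _ _ (leqnn k) lt_ik pk_pi.
by move: y_neq; rewrite y_eq ki eqxx.
Qed.

Lemma BP_off_path_adjE a h :
  a <= k -> h \in BP -> h \notin path_vertices p k ->
  e (p a) h = (a == k) && (h \in moved).
Proof.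
move=> le_ak h_BP h_off.
have [lt_ak|le_ka] := ltnP a k; last first.
  have -> : a = k by lia.
  by rewrite eqxx !inE off_path_neq //; lia.
rewrite (ltn_eqF lt_ak); case: a lt_ak {le_ak} => [|a] lt_ak.
  move: h_BP; rewrite inE (negbTE h_off) orbF => h_B.
  by apply/negP => /(compB_adj_p0 _ h_B)/eqP; rewrite off_path_neq.
by rewrite inner_nbhdE //= !off_path_neq //; lia.
Qed.

Lemma moved_tree_sym : symmetric (moved_tree e p k).
Proof.
move=> x y; rewrite /moved_tree e_sym.
by congr (_ && _ || _); [congr (~~ _) | ]; rewrite orbC.
Qed.

Lemma moved_tree_path a b :
  a <= k -> b <= k -> moved_tree e p k (p a) (p b) = e (p a) (p b).
Proof. by move=> le_ak le_bk; rewrite /moved_tree !path_notin_moved // !andbF /= orbF andbT. Qed.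

Lemma moved_tree_path_off a h :
  a <= k -> h \in BP -> h \notin path_vertices p k ->
  moved_tree e p k (p a) h = (a == 0) && (h \in moved).
Proof.
move=> le_ak h_BP h_off.
rewrite /moved_tree BP_off_path_adjE // path_notin_moved // !(off_path_neq h) //.
rewrite !eq_path_vertex //.
by case: (a == k); case: (a == 0); case: (h \in moved).
Qed.

Lemma moved_tree_off h1 h2 :
  h1 \notin path_vertices p k -> h2 \notin path_vertices p k ->
  moved_tree e p k h1 h2 = e h1 h2.
Proof.
by move=> h1_off h2_off; rewrite /moved_tree !off_path_neq //= orbF andbT.
Qed.

Lemma moved_tree_id : moved = set0 -> moved_tree e p k =2 e.
Proof. by move=> moved0 x y; rewrite /moved_tree moved0 !inE !andbF /= orbF andbT. Qed.

Local Notation G := (induced e BP).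
Local Notation G' := (induced (moved_tree e p k) BP).

Definition mirror (x : V) : V :=
  if [pick i : 'I_k.+1 | p i == x] is Some i then p (k - i) else x.

Lemma mirror_path i : i <= k -> mirror (p i) = p (k - i).
Proof.
move=> le_ik; rewrite /mirror; case: pickP => [j /eqP pj_pi | no_j].
  by rewrite (p_inj _ _ _ le_ik pj_pi) // -ltnS.
by have := no_j (Ordinal (le_ik : i < k.+1)); rewrite eqxx.
Qed.

Lemma mirror_off_path x : x \notin path_vertices p k -> mirror x = x.
Proof.
move=> x_off; rewrite /mirror; case: pickP => [j /eqP pj_x | //].
by case/path_vertexP: x_off; exists j; rewrite // -ltnS.
Qed.

Lemma mirrorK : involutive mirror.
Proof.
move=> x; case: (boolP (x \in path_vertices p k)) => [/path_vertexP [i le_ik ->]|x_off].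
  by rewrite !mirror_path ?leq_subr // subKn.
by rewrite !mirror_off_path.
Qed.

Lemma mirror_mono : {mono mirror : x y / G x y >-> G' x y}.
Proof.
have path_off i y : i <= k -> y \notin path_vertices p k ->
    G' (mirror (p i)) (mirror y) = G (p i) y.
  move=> le_ik y_off; rewrite mirror_path // mirror_off_path // /induced.
  rewrite !path_in_BP ?leq_subr //=; case: (boolP (y \in BP)) => //= y_BP.
  by rewrite moved_tree_path_off ?leq_subr // BP_off_path_adjE // subn_eq0; lia.
move=> x y.
case: (boolP (x \in path_vertices p k)) => [/path_vertexP [i le_ik ->]|x_off];
  case: (boolP (y \in path_vertices p k)) => [/path_vertexP [j le_jk ->]|y_off].
- rewrite !mirror_path // /induced !path_in_BP ?leq_subr //=.
  by rewrite moved_tree_path ?leq_subr // !path_adjE ?leq_subr //; lia.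
- exact: path_off.
- rewrite induced_sym ?path_off //; last exact: moved_tree_sym.
  exact: induced_sym.
- by rewrite !mirror_off_path // /induced moved_tree_off.
Qed.

Lemma walks_mirror l : walks G' l (p k) = walks G l (p 0).
Proof.
rewrite -(walks_inj _ _ _ (inv_inj mirrorK) mirror_mono l (p 0)).
by rewrite mirror_path // subn0.
Qed.

Lemma induced_moved_tree_inner i z :
  0 < i -> i < k -> G' (p i) z = (z == p i.-1) || (z == p i.+1).
Proof.
move=> i_gt0 lt_ik; rewrite /induced /moved_tree path_in_BP; last lia.
rewrite path_notin_moved; last lia.
rewrite !eq_path_vertex ?(gtn_eqF i_gt0) ?(ltn_eqF lt_ik) //=; try lia.
rewrite !andbF orbF andbT inner_nbhdE //.
by case: eqP => [->|_]; [|case: eqP => [->|_]]; rewrite ?path_in_BP //; lia.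
Qed.

Lemma induced_moved_tree_end z : G' (p k) z = (z == p k.-1).
Proof.
rewrite /induced /moved_tree path_in_BP // path_notin_moved // eqxx.
rewrite eq_path_vertex // (gtn_eqF k_gt0) !andbF !orbF in_setD1 /=.
case: eqP => [->|_] /=; last by rewrite /nbhd in_set andbN andbF.
rewrite path_in_BP ?leq_pred // andbT e_sym -{2}(prednK k_gt0); apply: p_edge; lia.
Qed.

Lemma walks_moved_end_leq c l :
  odd k -> c \in moved -> walks G' l (p k) <= walks G' l (p 0).
Proof.
move=> k_odd c_moved; set m := k./2.
have k_eq : k = m.*2.+1 by rewrite -[LHS]odd_double_half k_odd add1n.
have G'_sym : symmetric G' by apply: induced_sym; exact: moved_tree_sym.
have c_BP : c \in BP by rewrite inE moved_in_B.
have G'_p01 : G' (p 0) (p 1) by rewrite /induced !path_in_BP // moved_tree_path ?p_edge.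
have G'_p0c : G' (p 0) c.
  by rewrite /induced path_in_BP // c_BP moved_tree_path_off ?moved_off_path.
have mirror_leq l' j : j <= m -> walks G' l' (p (m + j)) <= walks G' l' (p (m - j)).
  apply: (proj1 (pendant_path_walks (fun l i => walks G' l (p i))
                                    (fun l => walks G' l c) m _ _ _ _ _ _ l')) => //.
  - move=> l0 i i_gt0 lt_ik; apply: walks_deg2 => [|z]; last by apply: induced_moved_tree_inner; lia.
    by rewrite eq_path_vertex; lia.
  - by move=> l0; rewrite -k_eq; apply: walks_leaf => z; rewrite induced_moved_tree_end k_eq.
  - move=> l0; apply: leq_walks_adj2 => //.
    by rewrite eq_sym off_path_neq ?moved_off_path.
  - by move=> l0; apply: leq_walks_adj; rewrite G'_sym.
case: l => [//|l]; rewrite (walks_leaf _ _ _ _ induced_moved_tree_end).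
apply: leq_trans (leq_walksS _ _ _ _ G'_sym G'_p01).
by have := mirror_leq l m (leqnn m); rewrite subnn addnn k_eq.
Qed.

End PathInTree.

Theorem corollary4 (V : finType) (e : rel V) (p : nat -> V) (k : nat) :
  is_tree e ->
  1 <= k ->
  is_path e p k ->
  (forall i, 0 < i -> i < k -> #|nbhd e (p i)| = 2) ->
  odd k ->
  forall l : nat, 1 <= l ->
    let S := compB e p k :|: path_vertices p k in
    ((walks (induced e S) l (p 0%N))%:Z - (walks (path_edge p k) l (p 0%N))%:Z
      <= (walks (induced (moved_tree e p k) S) l (p 0%N))%:Z
         - (walks (path_edge p k) l (p 0%N))%:Z)%R.
Proof.
move=> [[e_sym e_irr] [_ e_acyclic]] k_gt0 [p_inj p_edge] inner_deg2 k_odd l _ /=.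
rewrite lerD2r lez_nat.
have [moved0|[c c_moved]] := set_0Vmem (nbhd e (p k) :\ p k.-1).
  by rewrite (eq_walks _ _ (eq_induced _ _ _ (moved_tree_id _ _ _ moved0))).
rewrite -walks_mirror //.
exact: walks_moved_end_leq c_moved.
Qed.
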